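(* Let $G\in\mathcal{T}$. Let $\tau$ be a (possibly improper) cycle of edges in $G$ which is the boundary cycle of the graph $H$ of an embedded triangulated disc in $G$. Let $K$ be a $(3,6)$-tight subgraph of $G$ with $K\cap H=\tau$. Then $\tau$ is a $3$-cycle.
   Context: A torus graph with a single hole is a graph $G$ determined by a triple $(T,D,i)$ as follows. $M$ is a finite simplicial complex triangulating the torus $S^1\times S^1$ whose $1$-skeleton $T$ is a simple graph. $D$ is a simplicial complex triangulating a closed disc. $i:D\to M$ is a simplicial map which is injective on $2$-simplexes and respects adjacency of $2$-simplexes. $G$ is the subgraph of $T$ obtained by deleting the edges that are images under $i$ of interior $1$-simplexes of $D$. Its facial $3$-cycles (faces) are the $3$-cycles of $T$ bounding $2$-simplexes of $M$ that are not images of $2$-simplexes of $D$. For a finite simple graph $H=(V,E)$ the freedom number is $f(H)=3|V|-|E|$. $H$ is $(3,6)$-tight if $f(H)=6$ and $f(K)\ge 6$ for every subgraph $K$ with at least $3$ vertices. $\mathcal{T}$ denotes the class of $(3,6)$-tight torus graphs with a single hole. An embedded triangulated disc in $G$ is the image of a simplicial map from a triangulated disc to the simplicial complex of $G$ (whose $2$-simplexes are the faces of $G$) that is injective on $2$-simplexes. Its graph $H$ is the image graph, and its boundary cycle $\tau$ is the image of the disc's boundary cycle (possibly with repeated vertices or edges). *)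

From HB Require Import structures.
From mathcomp Require Import all_boot all_order all_algebra.
Set Implicit Arguments. Unset Strict Implicit. Unset Printing Implicit Defensive.

Section Complexes.
Variable V : finType.

(* A pure 2-dimensional simplicial complex is given by its set F of
   2-simplexes (triangles, 3-element vertex sets); its 1- and 0-simplexes
   are the faces of these triangles. *)

Definition cverts (F : {set {set V}}) : {set V} := \bigcup_(f in F) f.

Definition cedges (F : {set {set V}}) : {set {set V}} :=
  [set e : {set V} | (#|e| == 2) && [exists f in F, e \subset f]].

Definition nfaces (F : {set {set V}}) (e : {set V}) : nat :=
  #|[set f in F | e \subset f]|.

Definition int_edges (F : {set {set V}}) : {set {set V}} :=
  [set e in cedges F | nfaces F e == 2].
Definition bdry_edges (F : {set {set V}}) : {set {set V}} :=
  [set e in cedges F | nfaces F e == 1].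

Definition gconnected (Vs : {set V}) (Es : {set {set V}}) : Prop :=
  forall x y, x \in Vs -> y \in Vs ->
    connect [rel a b | [set a; b] \in Es] x y.

Definition link_verts (F : {set {set V}}) (v : V) : {set V} :=
  [set u | (u != v) && [exists f in F, (v \in f) && (u \in f)]].
Definition link_edges (F : {set {set V}}) (v : V) : {set {set V}} :=
  [set e in cedges F | (v \notin e) && ((v |: e) \in F)].

(* coherent orientation: each triangle gets a cyclic ordering of its
   vertices, and no directed edge is induced by two distinct triangles *)
Definition dedges (t : V * V * V) : seq (V * V) :=
  [:: (t.1.1, t.1.2); (t.1.2, t.2); (t.2, t.1.1)].

Definition orientable (F : {set {set V}}) : Prop :=
  exists ori : {set V} -> V * V * V,
    (forall f, f \in F -> f = [set (ori f).1.1; (ori f).1.2; (ori f).2]) /\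
    (forall f g p, f \in F -> g \in F ->
        p \in dedges (ori f) -> p \in dedges (ori g) -> f = g).

Definition pure2 (F : {set {set V}}) : Prop :=
  F != set0 /\ forall f, f \in F -> #|f| = 3.

(* F triangulates the torus, with vertex set all of V:
   a connected closed orientable combinatorial surface of Euler
   characteristic 0 (classification of surfaces). *)
Definition torus_triangulation (F : {set {set V}}) : Prop :=
  pure2 F /\ cverts F = setT /\
  (forall e, e \in cedges F -> nfaces F e = 2) /\
  (forall v, v \in cverts F -> gconnected (link_verts F v) (link_edges F v)) /\
  gconnected (cverts F) (cedges F) /\
  orientable F /\
  #|cverts F| + #|F| = #|cedges F|.

(* F triangulates a closed disc: a connected combinatorial surface with
   nonempty boundary and Euler characteristic 1. *)
Definition disc_triangulation (F : {set {set V}}) : Prop :=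
  pure2 F /\
  (forall e, e \in cedges F -> nfaces F e = 1 \/ nfaces F e = 2) /\
  (forall v, v \in cverts F -> gconnected (link_verts F v) (link_edges F v)) /\
  gconnected (cverts F) (cedges F) /\
  bdry_edges F != set0 /\
  #|cverts F| + #|F| = #|cedges F| + 1.

Definition boundary_cycle (F : {set {set V}}) (c : seq V) : Prop :=
  [/\ uniq c, 3 <= size c, {subset c <= cverts F} &
      bdry_edges F = [set [set x; next c x] | x in c]].

Definition freedom (Vs : {set V}) (Es : {set {set V}}) : int :=
  (Posz (3 * #|Vs|) - Posz #|Es|)%R.

Definition is_subgraph (Vk : {set V}) (Ek : {set {set V}})
  (Vs : {set V}) (Es : {set {set V}}) : Prop :=
  [/\ Vk \subset Vs, Ek \subset Es & forall e, e \in Ek -> e \subset Vk].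

Definition tight36 (Vs : {set V}) (Es : {set {set V}}) : Prop :=
  freedom Vs Es = Posz 6 /\
  forall Vk Ek, is_subgraph Vk Ek Vs Es -> 3 <= #|Vk| -> (Posz 6 <= freedom Vk Ek)%R.

End Complexes.

Section Maps.
Variables W V : finType.

Definition simp_map_inj2 (FD : {set {set W}}) (FT : {set {set V}})
  (ET : {set {set V}}) (phi : W -> V) : Prop :=
  [/\ (forall f, f \in FD -> {in f &, injective phi} /\ phi @: f \in FT),
      (forall e, e \in cedges FD -> phi @: e \in ET) &
      (forall f g, f \in FD -> g \in FD -> phi @: f = phi @: g -> f = g) ].

Definition respects_adjacency (FD : {set {set W}}) (phi : W -> V) : Prop :=
  forall f g, f \in FD -> g \in FD -> #|f :&: g| = 2 ->
    #|(phi @: f) :&: (phi @: g)| = 2.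

(* the torus graph with a single hole determined by (T, D, i) *)
Definition hole_graph_edges (FM : {set {set V}}) (FD : {set {set W}})
  (i : W -> V) : {set {set V}} :=
  cedges FM :\: [set i @: e | e : {set W} in int_edges FD].

Definition hole_graph_faces (FM : {set {set V}}) (FD : {set {set W}})
  (i : W -> V) : {set {set V}} :=
  FM :\: [set i @: f | f : {set W} in FD].

Definition torus_hole_data (FM : {set {set V}}) (FD : {set {set W}})
  (i : W -> V) : Prop :=
  [/\ torus_triangulation FM, disc_triangulation FD,
      simp_map_inj2 FD FM (cedges FM) i & respects_adjacency FD i].

End Maps.

From HB Require Import structures.
From mathcomp Require Import all_boot all_order all_algebra.
From mathcomp Require Import zify.
Set Implicit Arguments. Unset Strict Implicit. Unset Printing Implicit Defensive.

(* Let n be the length of tau, H the image of the disc D and f the freedom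
   number.  K and K \cup H are subgraphs of the (3,6)-tight G and K is tight,
   so f(H) >= f(K \cap H) = f(tau).  On the other hand only the n boundary
   vertices of D are identified with vertices of tau, and the interior edges
   of D map injectively to edges off tau (every torus edge lies in exactly two
   triangles), so by the Euler count 3|V_D| = |E_int| + 2|E_bd| + 3 of a disc
     f(H) <= f(tau) + 3(|V_D| - n) - |E_int| = f(tau) + 2|E_bd| + 3 - 3n.
   Since |E_bd| <= n, this forces n <= 3. *)

Section Surfaces.
Variable T : finType.
Implicit Types (F : {set {set T}}) (e f : {set T}).

Lemma card_cedges_face F f : f \in F -> #|f| = 3 ->
  #|[set e in cedges F | e \subset f]| = 3.
Proof.
move=> fF f3.
have -> : [set e in cedges F | e \subset f] = [set e : {set T} | e \subset f & #|e| == 2].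
  apply/setP => e; rewrite !inE andbC andbA; case ef: (e \subset f) => //=.
  by case: (#|e| == 2) => //=; apply/existsP; exists f; rewrite fF.
by rewrite cards_draws f3.
Qed.

Lemma sum_nfaces F :
  \sum_(e in cedges F) nfaces F e = \sum_(f in F) #|[set e in cedges F | e \subset f]|.
Proof.
have card_sum (A : {set {set T}}) (P : pred {set T}) :
    #|[set x in A | P x]| = \sum_(x in A) (P x : nat).
  rewrite -sum1_card big_mkcond [RHS]big_mkcond; apply: eq_bigr => x _.
  by rewrite !inE; case: (x \in A); case: (P x).
rewrite /nfaces; under eq_bigr do rewrite card_sum.
by under [RHS]eq_bigr do rewrite card_sum; exact: exchange_big.
Qed.

Lemma nfacesS F1 F2 e : F1 \subset F2 -> nfaces F1 e <= nfaces F2 e.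
Proof.
move=> sF; apply/subset_leq_card/subsetP => f.
by rewrite !inE => /andP[/(subsetP sF) -> ->].
Qed.

Lemma cedgesS F1 F2 : F1 \subset F2 -> cedges F1 \subset cedges F2.
Proof.
move=> sF; apply/subsetP => e; rewrite !inE => /andP[-> /existsP[f /andP[fF ef]]].
by apply/existsP; exists f; rewrite (subsetP sF).
Qed.

Section WithBoundary.
Variable F : {set {set T}}.
Hypothesis nfaces12 : forall e, e \in cedges F -> nfaces F e = 1 \/ nfaces F e = 2.

Lemma cedges_bdry_int : cedges F = bdry_edges F :|: int_edges F.
Proof.
apply/setP => e; rewrite in_setU [e \in bdry_edges F]in_set [e \in int_edges F]in_set.
by rewrite -andb_orr; have [/nfaces12 [] -> | //] := boolP (e \in cedges F).
Qed.

Lemma disjoint_bdry_int : [disjoint bdry_edges F & int_edges F].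
Proof.
rewrite -setI_eq0; apply/eqP/setP => e; rewrite !inE.
by case: (nfaces F e =P 1) => [-> /=|_]; rewrite !andbF.
Qed.

Lemma card_cedges_bdry_int : #|cedges F| = #|bdry_edges F| + #|int_edges F|.
Proof.
by rewrite cedges_bdry_int; apply/eqP; rewrite (leq_card_setU _ _).2 disjoint_bdry_int.
Qed.

Lemma sum_nfaces_bdry_int :
  \sum_(e in cedges F) nfaces F e = #|bdry_edges F| + 2 * #|int_edges F|.
Proof.
rewrite cedges_bdry_int (eq_bigl [predU bdry_edges F & int_edges F]) => [|e]; last first.
  by rewrite in_setU.
rewrite bigU ?disjoint_bdry_int //=.
rewrite -[#|_|]sum1_card mulnC -sum_nat_const.
by congr (_ + _); apply: eq_bigr => e; rewrite inE => /andP[_ /eqP].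
Qed.

End WithBoundary.

Lemma disc_vertex_count F : disc_triangulation F ->
  3 * #|cverts F| = #|int_edges F| + 2 * #|bdry_edges F| + 3.
Proof.
case=> [[_ F3] [nfaces12 [_ [_ [_ euler]]]]].
have faces3 : 3 * #|F| = #|bdry_edges F| + 2 * #|int_edges F|.
  rewrite -sum_nfaces_bdry_int // sum_nfaces mulnC -sum_nat_const.
  by apply: eq_bigr => f fF; rewrite card_cedges_face ?F3.
have := card_cedges_bdry_int nfaces12; lia.
Qed.

End Surfaces.

Lemma imset_inj_subset (aT rT : finType) (f : aT -> rT) (g e e' : {set aT}) :
  {in g &, injective f} -> e \subset g -> e' \subset g -> f @: e = f @: e' -> e = e'.
Proof.
move=> injf; suff sub (e1 e2 : {set aT}) :
    e1 \subset g -> e2 \subset g -> f @: e1 = f @: e2 -> e1 \subset e2.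
  by move=> eg e'g fee'; apply/eqP; rewrite eqEsubset (sub e e') ?(sub e' e).
move=> e1g e2g fe; apply/subsetP => x xe1.
have /imsetP[y ye2 fxy] : f x \in f @: e2 by rewrite -fe imset_f.
by rewrite (injf _ _ (subsetP e1g x xe1) (subsetP e2g y ye2) fxy).
Qed.

Lemma card_le2_mem (T : finType) (S : {set T}) a b x : #|S| <= 2 ->
  a \in S -> b \in S -> x \in S -> a != b -> x = a \/ x = b.
Proof.
move=> S2 aS bS xS ab; have : x \in [set a; b].
  suff /eqP -> : [set a; b] == S by [].
  rewrite eqEcard cards2 ab S2 andbT; apply/subsetP => y.
  by rewrite !inE => /orP[] /eqP ->.
by rewrite !inE => /orP[] /eqP; [left|right].
Qed.

Lemma leq_card_imset_subset (aT rT : finType) (f : aT -> rT)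
    (A : {pred aT}) (B : {set aT}) :
  {subset A <= B} -> #|f @: B| + #|A| <= #|f @: A| + #|B|.
Proof.
move=> sAB; set B' := B :\: [set x in A].
have splitB : #|B| = #|A| + #|B'|.
  rewrite -(cardsID [set x in A] B); congr (_ + _).
  by apply: eq_card => x; rewrite in_setI in_set andb_idl // => /sAB.
have sub : f @: B \subset f @: A :|: f @: B'.
  apply/subsetP => _ /imsetP[x xB ->]; rewrite in_setU.
  have [xA | xA] := boolP (x \in A); first by rewrite imset_f.
  by rewrite orbC imset_f // in_setD xB in_set xA.
have := leq_trans (subset_leq_card sub) (leq_card_setU _ _).
have := leq_imset_card f B'; lia.
Qed.

Section SimplicialMap.
Variables (W V : finType) (FD : {set {set W}}) (FH EH : {set {set V}}) (psi : W -> V).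
Hypothesis psi_simp : simp_map_inj2 FD FH EH psi.

Lemma simp_map_image_subgraph :
  is_subgraph (psi @: cverts FD) [set psi @: e | e : {set W} in cedges FD] [set: V] EH.
Proof.
have [_ psi_edges _] := psi_simp; split; first exact: subsetT.
  by apply/subsetP => _ /imsetP[e eE ->]; exact: psi_edges.
move=> _ /imsetP[e /setIdP[_ /existsP[f /andP[fF ef]]] ->].
by apply: imsetS; apply: subset_trans ef (bigcup_sup _ fF).
Qed.

Lemma simp_map_cverts_ge3 : pure2 FD -> 3 <= #|psi @: cverts FD|.
Proof.
have [psi_faces _ _] := psi_simp.
case=> /set0Pn[f fF] F3; have [injf _] := psi_faces f fF.
rewrite -(F3 f fF) -(card_in_imset injf).
by apply/subset_leq_card/imsetS; exact: bigcup_sup fF.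
Qed.

Hypothesis FH_thin : forall e, e \in cedges FH -> nfaces FH e <= 2.

(* Both triangles of the disc at an interior edge map to distinct triangles
   at its image, which leaves no room for the image of any other edge. *)
Lemma simp_map_int_edge_inj :
  {in int_edges FD & cedges FD, forall e e' : {set W}, psi @: e = psi @: e' -> e = e'}.
Proof.
have [psi_faces _ psi_inj] := psi_simp.
move=> e e' /setIdP[/setIdP[/eqP e2 _] /cards2P[f1 [f2 [f12 Ef]]]].
move=> /setIdP[_ /existsP[g /andP[gF e'g]]] ee'.
have /setIdP[f1F ef1] : f1 \in [set f in FD | e \subset f] by rewrite Ef !inE eqxx.
have /setIdP[f2F ef2] : f2 \in [set f in FD | e \subset f] by rewrite Ef !inE eqxx orbT.
have [inj1 f1H] := psi_faces f1 f1F; have [inj2 f2H] := psi_faces f2 f2F.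
have [_ gH] := psi_faces g gF.
have eg : psi @: e \subset psi @: g by rewrite ee' imsetS.
have above h : h \in FH -> psi @: e \subset h -> h \in [set h in FH | psi @: e \subset h].
  by move=> hH eh; rewrite inE hH.
have eH : psi @: e \in cedges FH.
  rewrite inE (card_in_imset (sub_in2 (subsetP ef1) inj1)) e2 /=.
  by apply/existsP; exists (psi @: f1); rewrite f1H imsetS.
have f12H : psi @: f1 != psi @: f2 by apply: contra f12 => /eqP /psi_inj ->.
have [gf|gf] := card_le2_mem (FH_thin eH) (above _ f1H (imsetS _ ef1))
  (above _ f2H (imsetS _ ef2)) (above _ gH eg) f12H.
- by apply: (imset_inj_subset inj1 ef1 _ ee'); rewrite -(psi_inj _ _ gF f1F gf).
- by apply: (imset_inj_subset inj2 ef2 _ ee'); rewrite -(psi_inj _ _ gF f2F gf).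
Qed.

(* The casts give these cardinals the syntactic form produced by unfolding
   [freedom], which [lia] needs to identify them. *)
Lemma leq_card_imset_edges :
  #|([set psi @: e | e : {set W} in bdry_edges FD] : {set {set V}})| + #|int_edges FD| <=
  #|([set psi @: e | e : {set W} in cedges FD] : {set {set V}})|.
Proof.
set imB := [set psi @: e | e : {set W} in bdry_edges FD].
set imI := [set psi @: e | e : {set W} in int_edges FD].
have intE e : e \in int_edges FD -> e \in cedges FD by move=> /setIdP[].
have bdryE e : e \in bdry_edges FD -> e \in cedges FD by move=> /setIdP[].
have -> : #|int_edges FD| = #|imI|.
  by rewrite card_in_imset // => e e' eI /intE; exact: simp_map_int_edge_inj.
have disjBI : [disjoint imB & imI].
  rewrite -setI_eq0; apply/eqP/setP => y; rewrite !inE.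
  apply/negP => /andP[/imsetP[e eB ->] /imsetP[e' e'I /esym]].
  move/(simp_map_int_edge_inj e'I (bdryE _ eB)) => e'e.
  by move: e'I eB; rewrite e'e => /setIdP[_ /eqP n2] /setIdP[_]; rewrite n2.
have /eqP <- : #|imB :|: imI| == #|imB| + #|imI| by rewrite (leq_card_setU _ _).2.
apply/subset_leq_card/subsetP => y.
rewrite in_setU => /orP[] /imsetP[e eE ->]; apply: imset_f; [exact: bdryE | exact: intE].
Qed.

End SimplicialMap.

Section Freedom.
Variable V : finType.
Implicit Types (Vs Vk Vh : {set V}) (Es Ek Eh : {set {set V}}).

Lemma freedom_setU Vs1 Es1 Vs2 Es2 :
  freedom (Vs1 :|: Vs2) (Es1 :|: Es2) =
  (freedom Vs1 Es1 + freedom Vs2 Es2 - freedom (Vs1 :&: Vs2) (Es1 :&: Es2))%R.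
Proof. by rewrite /freedom; have := cardsUI Vs1 Vs2; have := cardsUI Es1 Es2; lia. Qed.

Lemma is_subgraphU Vs1 Es1 Vs2 Es2 Vs Es :
  is_subgraph Vs1 Es1 Vs Es -> is_subgraph Vs2 Es2 Vs Es ->
  is_subgraph (Vs1 :|: Vs2) (Es1 :|: Es2) Vs Es.
Proof.
case=> sV1 sE1 inV1 [sV2 sE2 inV2]; split; rewrite ?subUset ?sV1 ?sE1 //.
move=> e; rewrite in_setU => /orP[/inV1|/inV2] se; apply: subset_trans se _.
  exact: subsetUl.
exact: subsetUr.
Qed.

Lemma tight_freedom_setI_le Vs Es Vk Ek Vh Eh :
  tight36 Vs Es -> is_subgraph Vk Ek Vs Es -> tight36 Vk Ek ->
  is_subgraph Vh Eh Vs Es -> 3 <= #|Vh| ->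
  (freedom (Vk :&: Vh) (Ek :&: Eh) <= freedom Vh Eh)%R.
Proof.
move=> [_ tightG] subK [fK _] subH Vh3.
have Vkh3 := leq_trans Vh3 (subset_leq_card (subsetUr Vk Vh)).
have := tightG _ _ (is_subgraphU subK subH) Vkh3.
by rewrite freedom_setU fK; lia.
Qed.

End Freedom.

Lemma hole_graph_faces_thin (V W : finType) (FM : {set {set V}}) (FD : {set {set W}})
    (i : W -> V) :
  torus_triangulation FM -> forall e, e \in cedges (hole_graph_faces FM FD i) ->
  nfaces (hole_graph_faces FM FD i) e <= 2.
Proof.
case=> [_ [_ [closedM _]]] e eH.
have sHM : hole_graph_faces FM FD i \subset FM := subsetDl _ _.
by rewrite -(closedM e (subsetP (cedgesS sHM) e eH)) nfacesS.
Qed.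

Theorem lemma4p2 (V W W' : finType)
  (FM : {set {set V}}) (FD : {set {set W}}) (i : W -> V)
  (Hdata : torus_hole_data FM FD i)
  (HT : tight36 [set: V] (hole_graph_edges FM FD i))
  (FD' : {set {set W'}}) (psi : W' -> V)
  (HD' : disc_triangulation FD')
  (Hpsi : simp_map_inj2 FD' (hole_graph_faces FM FD i)
                            (hole_graph_edges FM FD i) psi)
  (c : seq W') (Hc : boundary_cycle FD' c)
  (Vk : {set V}) (Ek : {set {set V}})
  (HKsub : is_subgraph Vk Ek [set: V] (hole_graph_edges FM FD i))
  (HKt : tight36 Vk Ek)
  (HKV : Vk :&: (psi @: cverts FD') = [set psi x | x in c])
  (HKE : Ek :&: [set psi @: e | e : {set W'} in cedges FD'] =
         [set psi @: e | e : {set W'} in bdry_edges FD']) :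
  size (map psi c) = 3.
Proof.
have [torusM _ _ _] := Hdata.
have [c_uniq c_ge3 c_sub bdry_c] := Hc.
have subH := simp_map_image_subgraph Hpsi.
have fH := tight_freedom_setI_le HT HKsub HKt subH (simp_map_cverts_ge3 Hpsi HD'.1).
rewrite HKV HKE in fH.
(* Stated explicitly so that [c] is read as a sequence predicate, as in [HKV]. *)
have cardV : #|psi @: cverts FD'| + #|c| <= #|[set psi x | x in c]| + #|cverts FD'|.
  exact: leq_card_imset_subset.
have cardE := leq_card_imset_edges Hpsi (hole_graph_faces_thin torusM).
have count := disc_vertex_count HD'.
have card_bdry : #|bdry_edges FD'| <= #|c| by rewrite bdry_c leq_imset_card.
rewrite size_map -(card_uniqP c_uniq) in c_ge3 *; rewrite /freedom in fH; lia.
Qed.
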